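(* The certifier's revenue-maximization problem in the certification market is equivalent to an instance of the non-linear pricing problem with buyer types $\psi$ distributed according to $G$ and valuation $v(q;\psi)=f(q;\phi(\psi))-g(q;\psi)$, where $\phi(\psi)$ satisfies $F(\phi(\psi))=G(\psi)$. Specifically: $v$ is concave in $q$, satisfies $v(0;\psi)=0$, and satisfies the strict single-crossing condition; and for every menu $M=\{(q_i,t_i)\}$, the certificate chosen by each producer type $\psi$ in equilibrium coincides with the quantity chosen by buyer type $\psi$ facing the menu $M$ (interpreting thresholds as quantities and transfers as prices), so the certifier's revenue (net of verification cost $c$ per non-trivial certificate) from $M$ equals the seller's revenue from $M$ in the pricing problem.
   Context: Certification market: producers with types $\psi$ (atomless distribution $G$, compact support), consumers with types $\phi$ (atomless distribution $F$, compact support), quality $q\in[0,1]$; cost $g(q;\psi)$ weakly convex non-decreasing in $q$, $g(0;\psi)=0$; value $f(q;\phi)$ weakly concave non-decreasing in $q$, $f(0;\phi)=0$, $0\le f\le 1$; strict single-crossing: for $\phi_1<\phi_2$, $q_1<q_2$: $f(q_2;\phi_2)-f(q_1;\phi_2)>f(q_2;\phi_1)-f(q_1;\phi_1)$, and for $\psi_1<\psi_2$, $q_1<q_2$: $g(q_2;\psi_2)-g(q_1;\psi_2)<g(q_2;\psi_1)-g(q_1;\psi_1)$. The certifier offers a menu $M=\{(q_i,t_i)\}$ of threshold certificates $[q_i,1]$ with transfers $t_i$ (always including $(0,0)$), incurs verification cost $c\ge0$ for each non-trivial certificate ($q_i>0$) issued, and each producer choosing threshold $q_i$ produces at quality $q_i$;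 producers choose certificates in equilibrium and then trade with consumers in a competitive (Walrasian) market equilibrium. Certifier revenue = expected transfers minus $c$ times the measure of producers buying non-trivial certificates. Non-linear pricing problem: a seller faces a buyer of type $\theta$ drawn from a known prior; the buyer's value for quantity $q\in[0,1]$ is $v(q;\theta)$, concave (not necessarily monotone) in $q$ with $v(0;\theta)=0$, satisfying strict single-crossing: for $\theta_1<\theta_2$, $q_1<q_2$, $v(q_2;\theta_2)-v(q_1;\theta_2)>v(q_2;\theta_1)-v(q_1;\theta_1)$. The seller commits to a menu $M$ of (quantity, price) pairs including $(0,0)$; the buyer selects a pair maximizing $v(q;\theta)-p$; the seller pays a constant cost $c$ for any non-zero quantity sold. $\operatorname{Rev}(M)$ denotes the expected price collected minus $c$ times the probability of selling a non-zero quantity. *)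

From HB Require Import structures.
From mathcomp Require Import all_boot all_order all_algebra.
From mathcomp Require Import all_classical all_reals all_analysis.
Set Implicit Arguments. Unset Strict Implicit. Unset Printing Implicit Defensive.
Import Order.TTheory GRing.Theory Num.Theory.
Import numFieldNormedType.Exports.
Local Open Scope classical_set_scope.
Local Open Scope ring_scope.

Section Defs.
Variable R : realType.

Definition cdfR (P : probability R R) (x : R) : R := fine (P [set` `]-oo, x]]).

Definition atomless (P : probability R R) : Prop := forall x : R, P [set x] = 0%E.

Definition compact_support (P : probability R R) : Prop :=
  exists a b : R, P [set` `[a, b]] = 1%E.

Definition in01 (q : R) : bool := (0 <= q) && (q <= 1).

Definition concave01 (h : R -> R) : Prop :=
  forall x y l, in01 x -> in01 y -> 0 <= l <= 1 ->
    l * h x + (1 - l) * h y <= h (l * x + (1 - l) * y).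

Definition convex01 (h : R -> R) : Prop :=
  forall x y l, in01 x -> in01 y -> 0 <= l <= 1 ->
    h (l * x + (1 - l) * y) <= l * h x + (1 - l) * h y.

Definition nondecreasing01 (h : R -> R) : Prop :=
  forall x y, in01 x -> in01 y -> x <= y -> h x <= h y.

Definition strict_single_crossing (h : R -> R -> R) : Prop :=
  forall th1 th2 q1 q2, th1 < th2 -> in01 q1 -> in01 q2 -> q1 < q2 ->
    h q2 th2 - h q1 th2 > h q2 th1 - h q1 th1.

Definition strict_cost_single_crossing (h : R -> R -> R) : Prop :=
  forall th1 th2 q1 q2, th1 < th2 -> in01 q1 -> in01 q2 -> q1 < q2 ->
    h q2 th2 - h q1 th2 < h q2 th1 - h q1 th1.

(* a menu: finite list of (threshold/quantity, transfer/price) pairs,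
   containing (0,0), with thresholds in [0,1] *)
Definition menu (M : seq (R * R)) : Prop :=
  (0, 0) \in M /\ all (fun m => in01 m.1) M.

(** ---- Certification market: producers choose certificates, then
    Walrasian trade. [s psi] is the certificate (q,t) bought by producer psi
    (who then produces at quality q); [k phi] is the quality bought by
    consumer phi ([None] = buys nothing); [p q] is the market price of
    goods carrying the certificate with threshold q. ---- *)

Definition consumer_utility (f : R -> R -> R) (p : R -> R) (ph : R)
    (o : option R) : R :=
  match o with None => 0 | Some q => f q ph - p q end.

Definition cert_equilibrium (PG PF : probability R R) (f g : R -> R -> R)
    (M : seq (R * R)) (s : R -> R * R) (k : R -> option R) (p : R -> R) :
    Prop :=
  [/\
      (forall ps, s ps \in M),
      (forall ps m, m \in M ->
          p m.1 - m.2 - g m.1 ps <= p (s ps).1 - (s ps).2 - g (s ps).1 ps),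
      (forall ph q, k ph = Some q -> q \in map fst M) /\
      (forall ph, 0 <= consumer_utility f p ph (k ph) /\
         forall q, q \in map fst M ->
           f q ph - p q <= consumer_utility f p ph (k ph)),
      ((forall m, measurable [set ps | s ps = m]) /\
       (forall q, measurable [set ph | k ph = Some q])) &
      (forall q, q \in map fst M ->
         PG [set ps | (s ps).1 = q] = PF [set ph | k ph = Some q])].

Definition certifier_revenue (PG : probability R R) (c : R)
    (s : R -> R * R) : \bar R :=
  ((\int[PG]_ps ((s ps).2)%:E) - (c%:E * PG [set ps | (0 < (s ps).1)%R]))%E.

Definition buyer_choice (v : R -> R -> R) (M : seq (R * R))
    (b : R -> R * R) : Prop :=
  forall th, b th \in M /\
    forall m, m \in M -> v m.1 th - m.2 <= v (b th).1 th - (b th).2.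

Definition seller_revenue (P : probability R R) (c : R)
    (b : R -> R * R) : \bar R :=
  ((\int[P]_th ((b th).2)%:E) - (c%:E * P [set th | ((b th).1 != 0)%R]))%E.

End Defs.

(* The three properties of v are pointwise: a concave value minus a convex
   cost is concave, v(0, .) = 0, and v is strictly single crossing since f
   is (phi being nondecreasing) and -g is.

   Single crossing sorts both sides of the market: certificates
   and purchases are monotone in type.  If some consumer of type <= phi psi
   buys a quality >= s(psi) and one of type > phi psi buys a quality
   <= s(psi), both buy s(psi), so prices bound value differences at
   phi psi; added to the producer's optimality condition this makes s(psi)
   v-optimal for the buyer psi (pooled_certificate_optimal).  Market
   clearing, extended from single qualities to sets of qualities, together
   with F(phi psi) = G(psi), shows that the producer types lacking such
   flanking consumers form a G-null set (unflanked_negligible); the proof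
   rests on two facts about measures on the real line (negligible_null_below
   and negligible_null_above).  The buyer choice that keeps s(psi) when it
   is v-optimal and otherwise takes the first v-optimal menu item is then
   measurable, equals s almost surely and yields the same revenue. *)

From HB Require Import structures.
From mathcomp Require Import all_boot all_order all_algebra.
From mathcomp Require Import all_classical all_reals all_analysis.
From mathcomp Require Import lra measurable_realfun.
Set Implicit Arguments. Unset Strict Implicit. Unset Printing Implicit Defensive.
Import Order.TTheory GRing.Theory Num.Theory.
Import numFieldNormedType.Exports.
Local Open Scope classical_set_scope.
Local Open Scope ring_scope.

Section measure_facts.
Context d (T : measurableType d) (R : realType).
Variable mu : {measure set T -> \bar R}.

Lemma measurable_cst_set (P : Prop) : measurable [set _ : T | P].
Proof.
have [HP|HP] := pselect P.
  by rewrite (_ : [set _ | P] = setT) //; apply/seteqP; split.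
by rewrite (_ : [set _ | P] = set0) //; apply/seteqP; split.
Qed.

Lemma measure_eq_outside_null (A B N : set T) :
  measurable A -> measurable B -> measurable N -> mu N = 0%E ->
  A `\` N = B `\` N -> mu A = mu B.
Proof.
move=> mA mB mN N0 AB.
have split_null (X : set T) : measurable X -> mu X = mu (X `\` N).
  move=> mX; have mXN := measurableI _ _ mX mN.
  rewrite (measureDI mu mX mN).
  by rewrite (@subset_measure0 _ _ _ mu _ _ mXN mN (@subIsetr _ X N) N0) adde0.
by rewrite (split_null A mA) (split_null B mB) AB.
Qed.

Lemma measureD_eq0 (A B : set T) : measurable A -> measurable B ->
  A `<=` B -> (mu B < +oo)%E -> (mu B <= mu A)%E -> mu (B `\` A) = 0%E.
Proof.
move=> mA mB AB Boo BA; apply/eqP; rewrite eq_le measure_ge0 andbT.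
by rewrite measureD // setIidr // sube_le0.
Qed.

End measure_facts.

Section finitely_valued.
Context d (X : measurableType d) (T : eqType).
Implicit Types (h : X -> T) (L : seq T).

Lemma measurable_fibrewise h L (Q : T -> set X) :
  (forall m, m \in L -> measurable [set x | h x = m]) ->
  (forall m, m \in L -> measurable (Q m)) ->
  measurable [set x | h x \in L /\ Q (h x) x].
Proof.
elim: L => [|a L IH] mh mQ.
  by rewrite (_ : [set x | _] = set0) //; apply/seteqP; split => x [].
have -> : [set x | h x \in a :: L /\ Q (h x) x] =
    ([set x | h x = a] `&` Q a) `|` [set x | h x \in L /\ Q (h x) x].
  apply/seteqP; split => x /=.
    by rewrite in_cons => -[/orP[/eqP ->|xL] Qx]; [left|right].
  by case=> [[-> Qx]|[xL Qx]]; rewrite in_cons ?eqxx ?xL ?orbT.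
apply: measurableU; first by apply: measurableI; [apply: mh|apply: mQ];
  rewrite mem_head.
by apply: IH => m mL; [apply: mh|apply: mQ]; rewrite in_cons mL orbT.
Qed.

Lemma measurable_mem_fibres h L :
  (forall m, m \in L -> measurable [set x | h x = m]) ->
  measurable [set x | h x \in L].
Proof.
move=> mh; rewrite (_ : [set x | h x \in L] = [set x | h x \in L /\ setT x]).
  exact: (measurable_fibrewise (Q := fun=> setT) mh (fun _ _ => measurableT)).
by apply/seteqP; split => x /= => [|[]//]; split.
Qed.

Lemma measurable_preimage_fin h L (Y : set T) :
  (forall x, h x \in L) -> (forall m, m \in L -> measurable [set x | h x = m]) ->
  measurable (h @^-1` Y).
Proof.
move=> hL mh; rewrite (_ : h @^-1` Y = [set x | h x \in L /\ Y (h x)]).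
  apply: (measurable_fibrewise (Q := fun m => [set _ | Y m])) => // m _.
  exact: measurable_cst_set.
by apply/seteqP; split => x /= => [Yx|[]//]; split.
Qed.

Lemma measurable_fun_fin d' (Y : measurableType d') h L (F : T -> Y) :
  (forall x, h x \in L) -> (forall m, m \in L -> measurable [set x | h x = m]) ->
  measurable_fun setT (F \o h).
Proof.
move=> hL mh _ B _; rewrite setTI.
exact: (measurable_preimage_fin (F @^-1` B) hL mh).
Qed.

Lemma measure_level_sets (R : realType) (mu : {measure set X -> \bar R}) h L :
  uniq L -> (forall m, m \in L -> measurable [set x | h x = m]) ->
  mu [set x | h x \in L] = (\sum_(m <- L) mu [set x | h x = m])%E.
Proof.
elim: L => [|a L IH] /=.
  by move=> _ _; rewrite big_nil (_ : [set x | _] = set0) ?measure0 //;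
    apply/seteqP; split.
move=> /andP[aL uL] mh.
have mhL m : m \in L -> measurable [set x | h x = m].
  by move=> mL; apply: mh; rewrite in_cons mL orbT.
have mL := measurable_mem_fibres mhL.
have -> : [set x | h x \in a :: L] = [set x | h x = a] `|` [set x | h x \in L].
  apply/seteqP; split => x /=; rewrite in_cons.
    by case/orP => [/eqP|]; [left|right].
  by case => [->|->]; rewrite ?eqxx ?orbT.
rewrite big_cons -IH // measureU //; first exact: mh (mem_head _ _).
by apply/seteqP; split => x // -[/= ha hL]; rewrite ha in hL; rewrite hL in aL.
Qed.

Lemma measurable_all (p : T -> X -> bool) L :
  (forall m, m \in L -> measurable [set x | p m x]) ->
  measurable [set x | all (p^~ x) L].
Proof.
elim: L => [|a L IH] mp /=.
  by rewrite (_ : [set x | _] = setT) //; apply/seteqP; split.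
rewrite (_ : [set x | p a x && _] = [set x | p a x] `&` [set x | all (p^~ x) L]).
  by apply: measurableI; [apply: mp; rewrite mem_head|
    apply: IH => m mL; apply: mp; rewrite in_cons mL orbT].
by apply/seteqP; split => x /= => [/andP[]|[-> ->]].
Qed.

Fixpoint first_such (p : T -> X -> bool) L (m0 : T) (x : X) : T :=
  if L is a :: L' then (if p a x then a else first_such p L' m0 x) else m0.

Lemma first_suchP (p : T -> X -> bool) L m0 x : (exists2 m, m \in L & p m x) ->
  first_such p L m0 x \in L /\ p (first_such p L m0 x) x.
Proof.
elim: L => [[m]//|a L IH] [m mL pm] /=.
case pa: (p a x); first by rewrite mem_head.
move: mL; rewrite in_cons => /orP[/eqP ema|mL]; first by rewrite -ema pm in pa.
by have [H1 H2] := IH (ex_intro2 _ _ m mL pm); rewrite in_cons H1 orbT.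
Qed.

Lemma measurable_first_such (p : T -> X -> bool) L m0 :
  (forall m, m \in L -> measurable [set x | p m x]) ->
  forall m, measurable [set x | first_such p L m0 x = m].
Proof.
move=> + m; elim: L => [|a L IH] mp /=; first exact: measurable_cst_set.
rewrite (_ : [set x | _] = ([set x | p a x] `&` [set _ | a = m]) `|`
                           (~` [set x | p a x] `&` [set x | first_such p L m0 x = m])).
  have mpa : measurable [set x | p a x] by apply: mp; rewrite mem_head.
  apply: measurableU; apply: measurableI => //; first exact: measurable_cst_set.
  - exact: measurableC.
  - by apply: IH => m' mL; apply: mp; rewrite in_cons mL orbT.
apply/seteqP; split => x /=; first by case: (p a x) => H; [left|right].
by case=> -[H1 H2]; [rewrite H1|move/negP/negbTE: H1 => ->].
Qed.

Lemma negligible_seq_union (R : realType) (mu : {measure set X -> \bar R})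
    L (N : T -> set X) :
  (forall m, mu.-negligible (N m)) ->
  mu.-negligible [set x | exists2 m, m \in L & N m x].
Proof.
move=> nN; elim: L => [|a L IH].
  by apply: (negligibleS _ (negligible_set0 mu)) => x [].
apply: (negligibleS _ (negligibleU (nN a) IH)) => x [m].
by rewrite in_cons => /orP[/eqP ->|mL Nx]; [left|right; exists m].
Qed.

Lemma seq_argmax (R : realType) (w : T -> R) L : L != [::] ->
  exists2 m, m \in L & forall m', m' \in L -> w m' <= w m.
Proof.
elim: L => [//|a [|b L] IH] _.
  by exists a; rewrite ?mem_head // => m'; rewrite inE => /eqP ->.
have [m mL max_m] := IH isT.
have [le_am|lt_ma] := lerP (w a) (w m).
  exists m; first by rewrite in_cons mL orbT.
  by move=> m'; rewrite in_cons => /orP[/eqP ->|/max_m].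
exists a; first exact: mem_head.
move=> m'; rewrite in_cons => /orP[/eqP -> //|/max_m le_m].
exact: le_trans le_m (ltW lt_ma).
Qed.

End finitely_valued.

Section null_rays.
Context (R : realType).

Lemma cofinal_seq (S : set R) : S !=set0 ->
  exists x : nat -> R, (forall n, S (x n)) /\ (forall y, S y -> exists n, y <= x n).
Proof.
move=> S0.
have [[m [Sm mub]]|nomax] := pselect (exists m, S m /\ ubound S m).
  by exists (fun=> m); split => // y Sy; exists 0%N; exact: mub.
have [Sub|Snub] := pselect (has_ubound S).
  have approx n : exists y, S y /\ sup S - n.+1%:R^-1 < y.
    have en : 0 < n.+1%:R^-1 :> R by rewrite invr_gt0.
    have [y Sy Hy] := sup_adherent en (conj S0 Sub : has_sup S).
    by exists y.
  have [x Hx] := choice approx; exists x; split => [n|y Sy]; first by case: (Hx n).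
  have ltyS : y < sup S.
    rewrite lt_neqAle sup_upper_bound // andbT; apply/eqP => ey.
    by apply: nomax; exists y; split => //; rewrite ey; exact: sup_upper_bound.
  have [n Hn] := ltr_add_invr ltyS; exists n; case: (Hx n) => _.
  move: Hn; set e := n.+1%:R^-1; set b := sup S; lra.
have above n : exists y, S y /\ n%:R < y.
  apply: contrapT => H; apply: Snub; exists n%:R => y Sy.
  by rewrite leNgt; apply/negP => Hy; apply: H; exists y.
have [x Hx] := choice above; exists x; split => [n|y Sy]; first by case: (Hx n).
exists (Num.bound `|y|); case: (Hx (Num.bound `|y|)) => _.
have := archi_boundP (normr_ge0 y); have := ler_norm y; lra.
Qed.

Variable mu : {measure set R -> \bar R}.

Lemma negligible_null_below (C : set R) : measurable C ->
  mu.-negligible (C `&` [set x | mu (C `&` `]-oo, x]%classic) = 0%E]).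
Proof.
move=> mC; set S := C `&` _.
have [S0|S0] := pselect (S !=set0); last first.
  rewrite (_ : S = set0); first exact: negligible_set0.
  by apply/seteqP; split => // y Sy; apply: S0; exists y.
have [x [Sx cof]] := cofinal_seq S0.
have null_below : mu.-negligible (\bigcup_n (C `&` `]-oo, x n]%classic)).
  apply: negligible_bigcup => n; apply/negligibleP; last exact: (Sx n).2.
  exact: measurableI.
apply: (negligibleS _ null_below) => y Sy; have [n yn] := cof y Sy.
by exists n => //; split; [case: Sy|rewrite /= in_itv].
Qed.

Lemma negligible_null_above (C : set R) : measurable C ->
  (forall x, mu [set x] = 0%E) ->
  mu.-negligible (C `&` [set x | mu (C `&` `]x, +oo[%classic) = 0%E]).
Proof.
move=> mC atomless_mu; set S := C `&` _.
have [S0|S0] := pselect (S !=set0); last first.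
  rewrite (_ : S = set0); first exact: negligible_set0.
  by apply/seteqP; split => // y Sy; apply: S0; exists y.
have [|x [Sx cof]] := @cofinal_seq [set y | S (- y)].
  by case: S0 => y Sy; exists (- y); rewrite /= opprK.
have null_above :
    mu.-negligible (\bigcup_n ((C `&` `]- x n, +oo[%classic) `|` [set - x n])).
  apply: negligible_bigcup => n; apply: negligibleU.
    apply/negligibleP; last exact: (Sx n).2.
    exact: measurableI.
  apply/(negligibleP _ (measurable_set1 _)); exact: atomless_mu.
apply: (negligibleS _ null_above) => y Sy.
have Sy' : [set y | S (- y)] (- y) by rewrite /= opprK.
have [n yn] := cof (- y) Sy'.
exists n => //; have [->|ny] := eqVneq y (- x n); first by right.
left; split; first by case: Sy.
by rewrite /= in_itv /= andbT lt_neqAle eq_sym ny -lerNl.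
Qed.

End null_rays.

Section net_value.
Context (R : realType).

(* The buyer's valuation in the pricing instance: the value of quality q to
   the consumer type matched with producer psi, net of psi's cost. *)
Definition net_value (f g : R -> R -> R) (phi : R -> R) (q ps : R) : R :=
  f q (phi ps) - g q ps.

Lemma in01_0 : in01 (0 : R).
Proof. by rewrite /in01 lexx ler01. Qed.

Lemma concave01_sub (a b : R -> R) :
  concave01 a -> convex01 b -> concave01 (fun q => a q - b q).
Proof.
move=> ca cb x y l hx hy hl.
have := ca x y l hx hy hl; have := cb x y l hx hy hl; lra.
Qed.

Lemma increasing_differences (h : R -> R -> R) th1 th2 q1 q2 :
  strict_single_crossing h -> th1 <= th2 -> in01 q1 -> in01 q2 -> q1 <= q2 ->
  h q2 th1 - h q1 th1 <= h q2 th2 - h q1 th2.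
Proof.
move=> sc; rewrite le_eqVlt => /orP[/eqP -> //|lt_th] hq1 hq2.
rewrite le_eqVlt => /orP[/eqP -> |lt_q]; first by rewrite !subrr.
exact/ltW/sc.
Qed.

Lemma single_crossing_nondecreasing (h : R -> R -> R) q :
  strict_single_crossing h -> (forall th, h 0 th = 0) -> in01 q ->
  nondecreasing_fun (h q).
Proof.
move=> sc h0 hq th1 th2 le_th.
have := increasing_differences sc le_th in01_0 hq (proj1 (andP hq)).
by rewrite !h0 !subr0.
Qed.

Lemma net_value_single_crossing (f g : R -> R -> R) (phi : R -> R) :
  {homo phi : x y / x <= y} ->
  strict_single_crossing f -> strict_cost_single_crossing g ->
  strict_single_crossing (net_value f g phi).
Proof.
move=> phi_nd scf scg th1 th2 q1 q2 lt_th hq1 hq2 lt_q; rewrite /net_value.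
have := scg _ _ _ _ lt_th hq1 hq2 lt_q.
have := increasing_differences scf (phi_nd _ _ (ltW lt_th)) hq1 hq2 (ltW lt_q).
lra.
Qed.

End net_value.

Section equilibrium.
Context (R : realType) (PG PF : probability R R) (f g : R -> R -> R) (phi : R -> R).
Hypothesis atomless_G : atomless PG.
Hypotheses (f0 : forall ph, f 0 ph = 0) (g0 : forall ps, g 0 ps = 0).
Hypotheses (scf : strict_single_crossing f) (scg : strict_cost_single_crossing g).
Hypothesis phi_nd : {homo phi : x y / x <= y}.
Hypothesis phi_quantile : forall ps, cdfR PF (phi ps) = cdfR PG ps.
Variables (M : seq (R * R)) (s : R -> R * R) (k : R -> option R) (p : R -> R).
Hypothesis menuM : menu M.
Hypothesis eqm : cert_equilibrium PG PF f g M s k p.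

Local Notation v := (net_value f g phi).

Let s_menu ps : s ps \in M. Proof. by case: eqm => + _ _ _ _; apply. Qed.
Let producer_opt ps m : m \in M ->
  p m.1 - m.2 - g m.1 ps <= p (s ps).1 - (s ps).2 - g (s ps).1 ps.
Proof. by case: eqm => _ + _ _ _; apply. Qed.
Let k_menu ph q : k ph = Some q -> q \in map fst M.
Proof. by case: eqm => _ _ [+ _] _ _; apply. Qed.
Let consumer_opt ph : 0 <= consumer_utility f p ph (k ph) /\
  forall q, q \in map fst M -> f q ph - p q <= consumer_utility f p ph (k ph).
Proof. by case: eqm => _ _ [_ +] _ _; apply. Qed.
Let s_fibres m : measurable [set ps | s ps = m].
Proof. by case: eqm => _ _ _ [+ _] _; apply. Qed.
Let k_fibres q : measurable [set ph | k ph = Some q].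
Proof. by case: eqm => _ _ _ [_ +] _; apply. Qed.
Let clearing_fibres q : q \in map fst M ->
  PG [set ps | (s ps).1 = q] = PF [set ph | k ph = Some q].
Proof. by case: eqm => _ _ _ _; apply. Qed.

Let Qs := undup (map fst M).

Lemma quality_in01 q : q \in map fst M -> in01 q.
Proof. by case: menuM => _ /allP in01M /mapP[m /in01M ? ->]. Qed.

Lemma consumer_choice_opt ph q q' : k ph = Some q -> q' \in map fst M ->
  f q' ph - p q' <= f q ph - p q.
Proof. by move=> kph q'M; have [_] := consumer_opt ph; rewrite kph; apply. Qed.

Lemma producer_sorting ps1 ps2 : ps1 < ps2 -> (s ps1).1 <= (s ps2).1.
Proof.
move=> lt12; rewrite leNgt; apply/negP => lt_q.
have := producer_opt ps1 (s_menu ps2); have := producer_opt ps2 (s_menu ps1).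
have in1 := quality_in01 (map_f fst (s_menu ps1)).
have in2 := quality_in01 (map_f fst (s_menu ps2)).
have := scg lt12 in2 in1 lt_q; lra.
Qed.

Lemma consumer_sorting ph1 ph2 q1 q2 : ph1 < ph2 ->
  k ph1 = Some q1 -> k ph2 = Some q2 -> q1 <= q2.
Proof.
move=> lt12 k1 k2; rewrite leNgt; apply/negP => lt_q.
have := consumer_choice_opt k1 (k_menu k2).
have := consumer_choice_opt k2 (k_menu k1).
have := scf lt12 (quality_in01 (k_menu k2)) (quality_in01 (k_menu k1)) lt_q.
lra.
Qed.

Lemma prices_support_values t ph1 ph2 q : ph1 <= t -> t <= ph2 ->
  k ph1 = Some q -> k ph2 = Some q ->
  forall q', q' \in map fst M -> f q' t - f q t <= p q' - p q.
Proof.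
move=> le1 le2 k1 k2 q' q'M.
have [in_q in_q'] := (quality_in01 (k_menu k1), quality_in01 q'M).
have [le_q|lt_q] := lerP q q'.
  have := increasing_differences scf le2 in_q in_q' le_q.
  have := consumer_choice_opt k2 q'M; lra.
have := increasing_differences scf le1 in_q' in_q (ltW lt_q).
have := consumer_choice_opt k1 q'M; lra.
Qed.

Definition optimal (m : R * R) (ps : R) : bool :=
  all (fun m' => v m'.1 ps - m'.2 <= v m.1 ps - m.2) M.

Lemma pooled_certificate_optimal ps ph1 ph2 q1 q2 :
  ph1 <= phi ps -> k ph1 = Some q1 -> (s ps).1 <= q1 ->
  phi ps < ph2 -> k ph2 = Some q2 -> q2 <= (s ps).1 ->
  optimal (s ps) ps.
Proof.
move=> le1 k1 ge_q1 lt2 k2 le_q2.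
have le_q12 := consumer_sorting (le_lt_trans le1 lt2) k1 k2.
have e1 : q1 = (s ps).1 by apply/eqP; rewrite eq_le (le_trans le_q12 le_q2) ge_q1.
have e2 : q2 = (s ps).1 by apply/eqP; rewrite eq_le le_q2 (le_trans ge_q1 le_q12).
rewrite {}e1 in k1; rewrite {}e2 in k2.
apply/allP => m mM.
have := prices_support_values le1 (ltW lt2) k1 k2 (map_f fst mM).
have := producer_opt ps mM; rewrite /net_value; lra.
Qed.

Lemma measurable_producers (P : set R) : measurable [set ps | P (s ps).1].
Proof.
exact: (measurable_preimage_fin [set m | P m.1] s_menu (fun m _ => s_fibres m)).
Qed.

Let buyersE (P : pred R) :
  [set ph | oapp P false (k ph)] = [set ph | k ph \in map Some ([seq q <- Qs | P q])].
Proof.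
apply/seteqP; split => ph /=; case kph: (k ph) => [q|] //=.
- by move=> Pq; rewrite mem_map // mem_filter Pq mem_undup (k_menu kph).
- by rewrite mem_map // mem_filter => /andP[].
- by case/mapP.
Qed.

Let buyer_fibres (L : seq R) m :
  m \in map Some L -> measurable [set ph | k ph = m].
Proof. by move=> /mapP[q _ ->]; exact: k_fibres. Qed.

Lemma measurable_buyers (P : pred R) : measurable [set ph | oapp P false (k ph)].
Proof. by rewrite buyersE; exact: measurable_mem_fibres (@buyer_fibres _). Qed.

Lemma clearing (P : pred R) :
  PG [set ps | P (s ps).1] = PF [set ph | oapp P false (k ph)].
Proof.
have -> : [set ps | P (s ps).1] = [set ps | (s ps).1 \in [seq q <- Qs | P q]].
  apply/seteqP; split => ps /=; rewrite mem_filter; last by case/andP.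
  by move=> ->; rewrite mem_undup map_f.
have uQs : uniq ([seq q <- Qs | P q]) by rewrite filter_uniq // undup_uniq.
rewrite buyersE (measure_level_sets PG uQs (fun q _ => measurable_producers [set q])).
have uSQs : uniq (map Some [seq q <- Qs | P q]) by rewrite map_inj_uniq.
rewrite (measure_level_sets PF uSQs (@buyer_fibres _)).
rewrite big_map; apply: eq_big_seq => q.
by rewrite mem_filter mem_undup => /andP[_ /clearing_fibres].
Qed.

Lemma no_abstention : PF [set ph | k ph = None] = 0%E.
Proof.
rewrite (_ : [set ph | _] = ~` [set ph | oapp xpredT false (k ph)]); last first.
  by apply/seteqP; split => ph /=; case: (k ph).
rewrite probability_setC; last exact: measurable_buyers.
rewrite (_ : _ [set ph | oapp _ false (k ph)] = 1%E) ?subee //.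
apply: etrans (esym (clearing xpredT)) _.
by rewrite (_ : [set ps | _] = setT); [exact: probability_setT|apply/seteqP].
Qed.

Lemma measurable_abstainers : measurable [set ph | k ph = None].
Proof.
rewrite (_ : [set ph | _] = ~` [set ph | oapp xpredT false (k ph)]).
  by apply: measurableC; exact: measurable_buyers.
by apply/seteqP; split => ph /=; case: (k ph).
Qed.

Lemma buyers_bound (P : pred R) (X : set R) : measurable X ->
  (forall ph q, X ph -> k ph = Some q -> P q) ->
  (PF X <= PG [set ps | P (s ps).1])%E.
Proof.
move=> mX XP; rewrite clearing.
set covering := [set ph | k ph = None] `|` [set ph | oapp P false (k ph)].
have mcovering : measurable covering.
  by apply: measurableU; [exact: measurable_abstainers|exact: measurable_buyers].
apply: (@le_trans _ _ (PF covering)).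
  rewrite le_measure ?inE // => ph Xph; case kph: (k ph) => [q|]; last by left.
  by right; rewrite /= kph; exact: XP Xph kph.
apply: le_trans (measureU2 _ measurable_abstainers (measurable_buyers P)) _.
rewrite -[leRHS]add0e; apply: leeD => //.
by move/eqP: no_abstention; rewrite eq_le => /andP[].
Qed.

Lemma lower_tails ps : PF `]-oo, phi ps]%classic = PG `]-oo, ps]%classic.
Proof.
rewrite -[LHS]fineK ?fin_num_measure // -[RHS]fineK ?fin_num_measure //.
by congr (_%:E); exact: phi_quantile.
Qed.

Lemma upper_tails ps : PF `]phi ps, +oo[%classic = PG `]ps, +oo[%classic.
Proof. by rewrite -!setCitvl !probability_setC // lower_tails. Qed.

Lemma below_null ps :
  (forall ph q, ph <= phi ps -> k ph = Some q -> q < (s ps).1) ->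
  PG ([set x | (s ps).1 <= (s x).1] `&` `]-oo, ps]%classic) = 0%E.
Proof.
move=> below; set q := (s ps).1.
have sub : [set x | (s x).1 < q] `<=` `]-oo, ps]%classic.
  move=> x /= lt_x; rewrite in_itv /= leNgt; apply/negP => /producer_sorting.
  by rewrite leNgt lt_x.
have bound : (PG `]-oo, ps]%classic <= PG [set x | ((s x).1 < q)%R])%E.
  rewrite -lower_tails.
  by apply: (@buyers_bound (fun y : R => y < q) `]-oo, phi ps]%classic).
rewrite (_ : _ `&` _ = `]-oo, ps]%classic `\` [set x | (s x).1 < q]).
  have fin : (PG `]-oo, ps]%classic < +oo)%E by rewrite ltey_eq fin_num_measure.
  exact: (@measureD_eq0 _ _ _ PG _ _ (measurable_producers [set y | y < q])
    (measurable_itv _) sub fin bound).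
apply/seteqP; split => x /= [le_x le_ps]; split => //.
  by rewrite ltNge le_x.
by rewrite leNgt; apply/negP.
Qed.

Lemma above_null ps :
  (forall ph q, phi ps < ph -> k ph = Some q -> (s ps).1 < q) ->
  PG ([set x | (s x).1 <= (s ps).1] `&` `]ps, +oo[%classic) = 0%E.
Proof.
move=> above; set q := (s ps).1.
have sub : `]-oo, ps]%classic `<=` [set x | (s x).1 <= q].
  move=> x /=; rewrite in_itv /= le_eqVlt => /orP[/eqP -> //|].
  exact: producer_sorting.
have bound : (PG [set x | ((s x).1 <= q)%R] <= PG `]-oo, ps]%classic)%E.
  rewrite -setCitvr (_ : [set x | _] = ~` [set x | q < (s x).1]); last first.
    by apply/seteqP; split => x /=; rewrite leNgt => /negP.
  rewrite !probability_setC //; last exact: (measurable_producers [set y | q < y]).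
  apply: leeB => //; rewrite -upper_tails.
  apply: (@buyers_bound (fun y : R => q < y) `]phi ps, +oo[%classic) => // ph q' /=.
  by rewrite in_itv /= andbT; exact: above.
rewrite (_ : _ `&` _ = [set x | (s x).1 <= q] `\` `]-oo, ps]%classic).
  have fin : (PG [set x | ((s x).1 <= q)%R] < +oo)%E.
    by rewrite ltey_eq fin_num_measure //; exact: (measurable_producers [set y | y <= q]).
  exact: (@measureD_eq0 _ _ _ PG _ _ (measurable_itv _)
    (measurable_producers [set y | y <= q]) sub fin bound).
apply/seteqP; split => x /= [le_x]; rewrite !in_itv /= ?andbT => lt_x; split => //.
  by rewrite leNgt lt_x.
by rewrite ltNge; apply/negP.
Qed.

Definition unflanked (ps : R) : Prop :=
  PG ([set x | (s ps).1 <= (s x).1] `&` `]-oo, ps]%classic) = 0%E \/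
  PG ([set x | (s x).1 <= (s ps).1] `&` `]ps, +oo[%classic) = 0%E.

Lemma unflanked_negligible : PG.-negligible unflanked.
Proof.
pose N q := ([set x | q <= (s x).1] `&`
               [set x | PG ([set y | q <= (s y).1] `&` `]-oo, x]%classic) = 0%E]) `|`
            ([set x | (s x).1 <= q] `&`
               [set x | PG ([set y | (s y).1 <= q] `&` `]x, +oo[%classic) = 0%E]).
have nullN q : PG.-negligible (N q).
  apply: negligibleU.
    apply: negligible_null_below; exact: (measurable_producers [set y | q <= y]).
  apply: negligible_null_above atomless_G.
  exact: (measurable_producers [set y | y <= q]).
apply: (negligibleS _ (negligible_seq_union Qs nullN)) => ps unfl.
exists (s ps).1; first by rewrite mem_undup map_f.
by rewrite /N /=; case: unfl => null; [left|right]; split.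
Qed.

Lemma flanked_optimal ps : ~ unflanked ps -> optimal (s ps) ps.
Proof.
move=> flanked.
have [ph1 [q1 [le1 [k1 ge_q1]]]] :
    exists ph q, ph <= phi ps /\ k ph = Some q /\ (s ps).1 <= q.
  apply: contrapT => none; apply: flanked; left; apply: below_null => ph q le kph.
  by rewrite ltNge; apply/negP => ge; apply: none; exists ph, q.
have [ph2 [q2 [lt2 [k2 le_q2]]]] :
    exists ph q, phi ps < ph /\ k ph = Some q /\ q <= (s ps).1.
  apply: contrapT => none; apply: flanked; right; apply: above_null => ph q lt kph.
  by rewrite ltNge; apply/negP => le; apply: none; exists ph, q.
exact: pooled_certificate_optimal le1 k1 ge_q1 lt2 k2 le_q2.
Qed.

Lemma measurable_optimal m : m \in M -> measurable [set ps | optimal m ps].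
Proof.
have v0 th : v 0 th = 0 by rewrite /net_value f0 g0 subr0.
have sc := net_value_single_crossing phi_nd scf scg.
have mv n : n \in M -> measurable_fun setT (fun ps => v n.1 ps - n.2).
  move=> nM; apply: nondecreasing_measurable => // x y le_xy.
  rewrite lerD2r; apply: (single_crossing_nondecreasing sc v0) => //.
  exact/quality_in01/map_f.
move=> mM; apply: measurable_all => m' m'M.
have := measurable_fun_ler (mv _ m'M) (mv _ mM) measurableT I.
by move=> /(_ [set true]); rewrite setTI.
Qed.

Definition buyer (ps : R) : R * R :=
  if optimal (s ps) ps then s ps else first_such optimal M (0, 0) ps.

Lemma optimal_exists ps : exists2 m, m \in M & optimal m ps.
Proof.
have M0 : M != [::] by case: menuM => M00 _; apply/eqP => M_nil; rewrite M_nil in M00.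
have [m mM max_m] := seq_argmax (fun m => v m.1 ps - m.2) M0.
by exists m => //; apply/allP => m' m'M; exact: max_m.
Qed.

Lemma buyer_opt : buyer_choice v M buyer.
Proof.
move=> ps; rewrite /buyer; case: ifP => [opt|_].
  by split=> // m mM; exact: (allP opt).
have [inM opt] := first_suchP (0, 0) (optimal_exists ps).
by split=> // m mM; exact: (allP opt).
Qed.

Lemma buyer_menu ps : buyer ps \in M.
Proof. by have [] := buyer_opt ps. Qed.

Lemma measurable_buyer m : measurable [set ps | buyer ps = m].
Proof.
have mO : measurable [set ps | optimal (s ps) ps].
  rewrite (_ : [set ps | _] = [set ps | s ps \in M /\ [set x | optimal (s ps) x] ps]).
    apply: (measurable_fibrewise (Q := fun m => [set x | optimal m x])).
      by move=> m' _; exact: s_fibres.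
    exact: measurable_optimal.
  by apply/seteqP; split => ps /= => [|[]//]; split.
rewrite (_ : [set ps | _] =
   ([set ps | optimal (s ps) ps] `&` [set ps | s ps = m]) `|`
   (~` [set ps | optimal (s ps) ps] `&` [set ps | first_such optimal M (0, 0) ps = m])).
  apply: measurableU; apply: measurableI => //; first exact: measurableC.
  exact: measurable_first_such measurable_optimal m.
apply/seteqP; split => ps /=; rewrite /buyer; first by case: ifP; [left|right].
by case=> -[opt <-]; [rewrite opt|rewrite ifF //; apply/negP].
Qed.

Lemma buyer_eq ps : ~ unflanked ps -> buyer ps = s ps.
Proof. by move=> flanked; rewrite /buyer flanked_optimal. Qed.

Lemma buyer_ae : {ae PG, forall ps, buyer ps = s ps}.
Proof.
apply: (negligibleS _ unflanked_negligible) => ps /= ne; apply: contrapT.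
by move=> flanked; apply: ne; exact: buyer_eq.
Qed.

Lemma revenue_eq c : certifier_revenue PG c s = seller_revenue PG c buyer.
Proof.
have [N [mN N0 unflN]] := unflanked_negligible.
have off_N ps : ~ N ps -> buyer ps = s ps.
  by move=> ps_N; apply: buyer_eq => unfl; apply: ps_N; exact: unflN.
rewrite /certifier_revenue /seller_revenue; congr (_ - _ * _)%E.
  apply: ae_eq_integral => //.
  - exact: (measurable_fun_fin (fun m => (m.2)%:E) s_menu (fun m _ => s_fibres m)).
  - exact: (measurable_fun_fin (fun m => (m.2)%:E) buyer_menu
              (fun m _ => measurable_buyer m)).
  by move: buyer_ae; apply: filterS => ps ->.
have mA : measurable [set ps | 0 < (s ps).1].
  exact: (measurable_producers [set q | 0 < q]).
have mB : measurable [set ps | (buyer ps).1 != 0].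
  exact: (measurable_preimage_fin [set m | m.1 != 0] buyer_menu
           (fun m _ => measurable_buyer m)).
have q_ge0 ps : 0 <= (s ps).1 by case/andP: (quality_in01 (map_f fst (s_menu ps))).
have same_off_N : [set ps | 0 < (s ps).1] `\` N = [set ps | (buyer ps).1 != 0] `\` N.
  apply/seteqP; split => ps /= [q_ps ps_N]; split => //; move: q_ps;
    rewrite (off_N _ ps_N) lt0r; first by case/andP.
  by move=> ->; rewrite q_ge0.
exact: (@measure_eq_outside_null _ _ _ PG _ _ _ mA mB mN N0 same_off_N).
Qed.

Lemma certification_as_pricing c : exists b : R -> R * R,
  [/\ buyer_choice v M b,
      (forall m, measurable [set ps | b ps = m]),
      {ae PG, forall ps, b ps = s ps} &
      certifier_revenue PG c s = seller_revenue PG c b].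
Proof.
exists buyer; split; [exact: buyer_opt|exact: measurable_buyer|exact: buyer_ae|].
exact: revenue_eq.
Qed.

End equilibrium.

Theorem proposition1 (R : realType) (PG PF : probability R R)
    (f g : R -> R -> R) (c : R) (phi : R -> R) :
  atomless PG -> compact_support PG ->
  atomless PF -> compact_support PF ->
  (forall ps, convex01 (fun q => g q ps)) ->
  (forall ps, nondecreasing01 (fun q => g q ps)) ->
  (forall ps, g 0 ps = 0) ->
  (forall ph, concave01 (fun q => f q ph)) ->
  (forall ph, nondecreasing01 (fun q => f q ph)) ->
  (forall ph, f 0 ph = 0) ->
  (forall ph q, in01 q -> 0 <= f q ph <= 1) ->
  strict_single_crossing f ->
  strict_cost_single_crossing g ->
  0 <= c ->
  (* phi(psi) is the consumer type with F(phi(psi)) = G(psi), taken nondecreasing *)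
  {homo phi : x y / x <= y} ->
  (forall ps, cdfR PF (phi ps) = cdfR PG ps) ->
  let v := fun q ps => f q (phi ps) - g q ps in
  [/\ (forall ps, concave01 (fun q => v q ps)),
      (forall ps, v 0 ps = 0),
      strict_single_crossing v &
      forall (M : seq (R * R)) (s : R -> R * R) (k : R -> option R)
             (p : R -> R),
        menu M -> cert_equilibrium PG PF f g M s k p ->
        exists b : R -> R * R,
          [/\ buyer_choice v M b,
              (forall m, measurable [set ps | b ps = m]),
              {ae PG, forall ps, b ps = s ps} &
              certifier_revenue PG c s = seller_revenue PG c b]].
Proof.
move=> atomless_G _ _ _ g_convex _ g0 f_concave _ f0 _ scf scg _ phi_nd phi_quantile v.
split.
- by move=> ps; exact: concave01_sub (f_concave (phi ps)) (g_convex ps).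
- by move=> ps; rewrite /v f0 g0 subr0.
- exact: net_value_single_crossing.
move=> M s k p menuM eqm.
have [b [b_opt b_meas b_ae b_rev]] :=
  certification_as_pricing atomless_G f0 g0 scf scg phi_nd phi_quantile menuM eqm c.
by exists b.
Qed.
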